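(* Let $n\ge2$ be an integer. The number of pairs of disjoint matrices in $\Sigma_{n^2}$ equals the number of pairs of disjoint matrices in $\Pi_n$.
   Context: $\Sigma_{n^2}$ is the set of all $n^2\times n^2$ permutation matrices (binary matrices with exactly one 1 in every row and every column) which, when partitioned into an $n\times n$ array of $n\times n$ blocks, have exactly one entry equal to 1 in each block; $A=[a_{ij}],B=[b_{ij}]\in\Sigma_{n^2}$ are disjoint if there are no $i,j$ with $a_{ij}=b_{ij}=1$. $\Pi_n$ is the set of all $n\times n$ matrices whose entries are ordered pairs $\langle a,b\rangle$ with $a,b\in\{1,\dots,n\}$ such that in every row the first components, read in order, form a permutation of $\{1,\dots,n\}$, and in every column the second components, read in order, form a permutation of $\{1,\dots,n\}$; $\pi'=[p'_{ij}],\pi''=[p''_{ij}]\in\Pi_n$ are disjoint if $p'_{ij}\ne p''_{ij}$ for all $i,j$. *)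

From mathcomp Require Import all_boot all_algebra.
Set Implicit Arguments. Unset Strict Implicit. Unset Printing Implicit Defensive.

Definition is_perm_mxb (m : nat) (A : 'M[bool]_m) : bool :=
  [forall i, #|[set j | A i j]| == 1] && [forall j, #|[set i | A i j]| == 1].

Definition in_Sigma (n : nat) (A : 'M[bool]_(n ^ 2)) : bool :=
  is_perm_mxb A &&
  [forall a : 'I_n, forall b : 'I_n,
     #|[set ij : 'I_(n ^ 2) * 'I_(n ^ 2) |
         [&& A ij.1 ij.2, ij.1 %/ n == a & ij.2 %/ n == b]]| == 1].

Definition disjoint_Sigma (n : nat) (A B : 'M[bool]_(n ^ 2)) : bool :=
  [forall i, forall j, ~~ (A i j && B i j)].

(* Pi_n: n x n matrices with entries ordered pairs in {0..n-1}^2 (shifted from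
   {1..n}); first components in each row form a permutation, second components
   in each column form a permutation. *)
Definition in_Pi (n : nat) (P : 'M[('I_n * 'I_n)%type]_n) : bool :=
  [forall i, injectiveb (fun j => (P i j).1)] &&
  [forall j, injectiveb (fun i => (P i j).2)].

Definition disjoint_Pi (n : nat) (P Q : 'M[('I_n * 'I_n)%type]_n) : bool :=
  [forall i, forall j, P i j != Q i j].

Definition Sigma_disjoint_pairs (n : nat) :=
  [set AB : 'M[bool]_(n ^ 2) * 'M[bool]_(n ^ 2) |
     [&& in_Sigma AB.1, in_Sigma AB.2 & disjoint_Sigma AB.1 AB.2]].

Definition Pi_disjoint_pairs (n : nat) :=
  [set PQ : 'M[('I_n * 'I_n)%type]_n * 'M[('I_n * 'I_n)%type]_n |
     [&& in_Pi PQ.1, in_Pi PQ.2 & disjoint_Pi PQ.1 PQ.2]].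

From mathcomp Require Import all_boot all_algebra.
From mathcomp Require Import zify.
Set Implicit Arguments. Unset Strict Implicit. Unset Printing Implicit Defensive.

(* Index [i < n^2] as the pair (block [i %/ n], offset [i %% n]).  A matrix
   [P] of Pi_n becomes the 0/1 matrix whose block (a, b) has its single 1 at
   offset [P a b].  Under this correspondence the row and column conditions of
   Pi_n become the permutation-matrix conditions, every block automatically
   holds exactly one 1, and disjointness is preserved entrywise.  Conversely
   every element of Sigma_{n^2} is obtained by reading off the position of the
   1 in each block, so the correspondence restricts to a bijection between the
   sets of disjoint pairs. *)

Section BlockIndex.

Variable n : nat.

Lemma blk_lt (i : 'I_(n ^ 2)) : i %/ n < n.
Proof. by case: n i => [[]|m i] //; rewrite ltn_divLR // mulnn. Qed.

Lemma ofs_lt (i : 'I_(n ^ 2)) : i %% n < n.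
Proof. by case: n i => [[]|m i]; rewrite ?ltn_pmod. Qed.

Lemma bpos_lt (a r : 'I_n) : a * n + r < n ^ 2.
Proof. rewrite -mulnn; have := ltn_ord a; have := ltn_ord r; nia. Qed.

Definition blk (i : 'I_(n ^ 2)) : 'I_n := Ordinal (blk_lt i).
Definition ofs (i : 'I_(n ^ 2)) : 'I_n := Ordinal (ofs_lt i).
Definition bpos (a r : 'I_n) : 'I_(n ^ 2) := Ordinal (bpos_lt a r).

Lemma blk_bpos a r : blk (bpos a r) = a.
Proof.
apply: val_inj => /=; have n_gt0 : 0 < n by case: n a r => [[]|].
by rewrite divnMDl // divn_small ?addn0.
Qed.

Lemma ofs_bpos a r : ofs (bpos a r) = r.
Proof. by apply: val_inj; rewrite /= modnMDl modn_small. Qed.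

Lemma blk_eqE i a : (blk i == a) = (i %/ n == a).
Proof. by []. Qed.

Lemma bposK i : bpos (blk i) (ofs i) = i.
Proof. by apply: val_inj; rewrite /= -divn_eq. Qed.

Lemma bpos_eq a r b c : (bpos a r == bpos b c) = (a == b) && (r == c).
Proof.
apply/eqP/andP => [e | [/eqP -> /eqP ->] //].
by move: (congr1 blk e) (congr1 ofs e); rewrite !blk_bpos !ofs_bpos => -> ->.
Qed.

End BlockIndex.

Section PermMatrix.

Variables (m : nat) (A : 'M[bool]_m).
Hypothesis A_perm : is_perm_mxb A.

Lemma perm_mxb_row_uniq i j j' : A i j -> A i j' -> j = j'.
Proof.
case/andP: A_perm => /forallP/(_ i)/cards1P [x hx] _ Aij Aij'.
have: j \in [set j | A i j] by rewrite inE.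
have: j' \in [set j | A i j] by rewrite inE.
by rewrite hx !inE => /eqP -> /eqP ->.
Qed.

Lemma perm_mxb_col_uniq i i' j : A i j -> A i' j -> i = i'.
Proof.
case/andP: A_perm => _ /forallP/(_ j)/cards1P [x hx] Aij Ai'j.
have: i \in [set i | A i j] by rewrite inE.
have: i' \in [set i | A i j] by rewrite inE.
by rewrite hx !inE => /eqP -> /eqP ->.
Qed.

End PermMatrix.

Section Correspondence.

Variable n : nat.
Local Notation pimx := 'M[('I_n * 'I_n)%type]_n.
Local Notation sgmx := 'M[bool]_(n ^ 2).

Definition Sigma_of_Pi (P : pimx) : sgmx :=
  \matrix_(i, j) (P (blk i) (blk j) == (ofs i, ofs j)).

(* The default [(a, b)] is never used on elements of Sigma_{n^2}. *)
Definition Pi_of_Sigma (A : sgmx) : pimx :=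
  \matrix_(a, b) odflt (a, b) [pick rc | A (bpos a rc.1) (bpos b rc.2)].

Lemma Sigma_of_PiE P a r b c :
  Sigma_of_Pi P (bpos a r) (bpos b c) = (P a b == (r, c)).
Proof. by rewrite mxE !blk_bpos !ofs_bpos. Qed.

Lemma Sigma_of_Pi_inj : injective Sigma_of_Pi.
Proof.
move=> P Q ePQ; apply/matrixP => a b.
have := Sigma_of_PiE P a (P a b).1 b (P a b).2.
rewrite ePQ Sigma_of_PiE -surjective_pairing eqxx.
by move/eqP ->.
Qed.

Lemma disjoint_Sigma_of_Pi P Q :
  disjoint_Sigma (Sigma_of_Pi P) (Sigma_of_Pi Q) = disjoint_Pi P Q.
Proof.
apply/forallP/forallP => [dPQ a | dPQ i].
- apply/forallP => b; apply/negP => /eqP ePQ.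
  move/forallP/(_ (bpos b (P a b).2)): (dPQ (bpos a (P a b).1)).
  by rewrite !Sigma_of_PiE -ePQ -surjective_pairing eqxx.
- apply/forallP => j; rewrite !mxE; apply/negP => /andP [/eqP eP /eqP eQ].
  by move/forallP/(_ (blk j)): (dPQ (blk i)); rewrite eP eQ eqxx.
Qed.

Lemma Sigma_of_Pi_row_card P a r : in_Pi P ->
  #|[set j | Sigma_of_Pi P (bpos a r) j]| = 1.
Proof.
case/andP => /forallP/(_ a)/injectiveP row_inj _.
pose b := invF row_inj r; have Pab1 : (P a b).1 = r := f_invF row_inj r.
apply/eqP/cards1P; exists (bpos b (P a b).2); apply/setP => j.
rewrite -(bposK j) !inE Sigma_of_PiE bpos_eq.
apply/eqP/andP => [ePj | [/eqP -> /eqP ->]].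
- have bj : blk j = b by apply: (row_inj); rewrite /= ePj Pab1.
  by rewrite -bj ePj /= !eqxx.
- by rewrite -Pab1 -surjective_pairing.
Qed.

Lemma Sigma_of_Pi_col_card P b c : in_Pi P ->
  #|[set i | Sigma_of_Pi P i (bpos b c)]| = 1.
Proof.
case/andP => _ /forallP/(_ b)/injectiveP col_inj.
pose a := invF col_inj c; have Pab2 : (P a b).2 = c := f_invF col_inj c.
apply/eqP/cards1P; exists (bpos a (P a b).1); apply/setP => i.
rewrite -(bposK i) !inE Sigma_of_PiE bpos_eq.
apply/eqP/andP => [ePi | [/eqP -> /eqP ->]].
- have ai : blk i = a by apply: (col_inj); rewrite /= ePi Pab2.
  by rewrite -ai ePi /= !eqxx.
- by rewrite -Pab2 -surjective_pairing.
Qed.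

Lemma Sigma_of_Pi_block_card P (a b : 'I_n) :
  #|[set ij : 'I_(n ^ 2) * 'I_(n ^ 2) |
      [&& Sigma_of_Pi P ij.1 ij.2, ij.1 %/ n == a & ij.2 %/ n == b]]| = 1.
Proof.
apply/eqP/cards1P; exists (bpos a (P a b).1, bpos b (P a b).2).
apply/setP => -[i j]; rewrite !inE /= -!blk_eqE.
rewrite -(bposK i) -(bposK j) Sigma_of_PiE !blk_bpos.
rewrite xpair_eqE !bpos_eq.
case: (blk i =P a) => [-> | _]; last by rewrite andbF.
case: (blk j =P b) => [-> | _]; last by rewrite !andbF.
by rewrite [P a b]surjective_pairing xpair_eqE /= !andbT (eq_sym (ofs i)) (eq_sym (ofs j)).
Qed.

Lemma in_Sigma_of_Pi P : in_Pi P -> in_Sigma (Sigma_of_Pi P).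
Proof.
move=> PiP; apply/andP; split; [apply/andP; split |]; apply/forallP.
- by move=> i; rewrite -(bposK i) Sigma_of_Pi_row_card.
- by move=> j; rewrite -(bposK j) Sigma_of_Pi_col_card.
- by move=> a; apply/forallP => b; rewrite Sigma_of_Pi_block_card.
Qed.

Lemma in_Sigma_block A (a b : 'I_n) : in_Sigma A ->
  exists rc, forall r c, A (bpos a r) (bpos b c) = ((r, c) == rc).
Proof.
case/andP => _ /forallP/(_ a)/forallP/(_ b)/cards1P [x block_x].
have x_pos : x = (bpos a (ofs x.1), bpos b (ofs x.2)).
  move: (set11 x); rewrite -block_x inE -!blk_eqE => /and3P [_ /eqP <- /eqP <-].
  by rewrite !bposK -surjective_pairing.
exists (ofs x.1, ofs x.2) => r c.
move/setP/(_ (bpos a r, bpos b c)): block_x.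
rewrite !inE -!blk_eqE !blk_bpos !eqxx !andbT => ->.
by rewrite {1}x_pos !xpair_eqE !bpos_eq !eqxx.
Qed.

Lemma Pi_of_SigmaE A a r b c : in_Sigma A ->
  A (bpos a r) (bpos b c) = (Pi_of_Sigma A a b == (r, c)).
Proof.
move=> SigmaA; have [rc A_rc] := in_Sigma_block a b SigmaA.
rewrite mxE A_rc; case: pickP => [rc' | none] /=.
- by rewrite A_rc -surjective_pairing => /eqP ->; rewrite eq_sym.
- by move: (none rc); rewrite A_rc -surjective_pairing eqxx.
Qed.

Lemma Pi_of_SigmaK A : in_Sigma A -> Sigma_of_Pi (Pi_of_Sigma A) = A.
Proof.
move=> SigmaA; apply/matrixP => i j.
by rewrite -(bposK i) -(bposK j) Sigma_of_PiE Pi_of_SigmaE.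
Qed.

Lemma in_Pi_of_Sigma A : in_Sigma A -> in_Pi (Pi_of_Sigma A).
Proof.
move=> SigmaA; have A_perm : is_perm_mxb A by case/andP: SigmaA.
set P := Pi_of_Sigma A.
have A_P a b : A (bpos a (P a b).1) (bpos b (P a b).2).
  by rewrite Pi_of_SigmaE // -surjective_pairing.
apply/andP; split; apply/forallP.
- move=> a; apply/injectiveP => b b' /= eP1; move: (A_P a b); rewrite eP1 => A_ab.
  by have /eqP := perm_mxb_row_uniq A_perm A_ab (A_P a b'); rewrite bpos_eq => /andP [/eqP].
- move=> b; apply/injectiveP => a a' /= eP2; move: (A_P a b); rewrite eP2 => A_ab.
  by have /eqP := perm_mxb_col_uniq A_perm A_ab (A_P a' b); rewrite bpos_eq => /andP [/eqP].
Qed.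

End Correspondence.

Theorem corollary3 (n : nat) (hn : 2 <= n) :
  #|Sigma_disjoint_pairs n| = #|Pi_disjoint_pairs n|.
Proof.
pose F (PQ : 'M[('I_n * 'I_n)%type]_n * 'M[('I_n * 'I_n)%type]_n) :=
  (Sigma_of_Pi PQ.1, Sigma_of_Pi PQ.2).
have F_inj : injective F by move=> [P Q] [P' Q'] [/Sigma_of_Pi_inj -> /Sigma_of_Pi_inj ->].
rewrite -(card_imset (mem (Pi_disjoint_pairs n)) F_inj).
apply: eq_card => -[A B]; rewrite inE /=; apply/idP/imsetP.
- case/and3P => SigmaA SigmaB dAB.
  exists (Pi_of_Sigma A, Pi_of_Sigma B); last by rewrite /F /= !Pi_of_SigmaK.
  by rewrite inE /= !in_Pi_of_Sigma // -disjoint_Sigma_of_Pi !Pi_of_SigmaK.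
- case=> -[P Q]; rewrite inE /= => /and3P [PiP PiQ dPQ] [-> ->].
  by rewrite !in_Sigma_of_Pi // disjoint_Sigma_of_Pi.
Qed.
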